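(* Let $\mathbb{F}$ be a distribution, $n\in\mathbb{N}$, and $\hat\rho_n$ a risk estimator such that $\hat\rho_n(\boldsymbol{X})$ is bounded and non-negative and $\rho_{\mathbb{F}}(S(c))$ is finite for all $c\ge0$. Then the function $c\mapsto\rho_{\mathbb{F}}(S(c))$ is non-increasing and continuous on $[0,\infty)$, with $|\rho_{\mathbb{F}}(S(c))-\rho_{\mathbb{F}}(S(c'))|\le |c-c'|\,\|\hat\rho_n(\boldsymbol{X})\|_{\sup}$. Consequently, if $c^*_{\mathbb{F}}\in(0,\infty)$, then the optimally scaled estimator $c^*_{\mathbb{F}}\hat\rho_n$ is risk unbiased under $\mathbb{F}$, i.e. $$\rho_{\mathbb{F}}\big(X+c^*_{\mathbb{F}}\,\hat\rho_n(\boldsymbol{X})\big)=0.$$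
   Context: Setting: on a probability space, $X$ is a real random variable and $\boldsymbol{X}=(X_1,\dots,X_n)$ a sample independent of $X$, with $X,X_1,\dots,X_n$ i.i.d. with distribution $\mathbb{F}$. $\rho$ is a monetary risk measure (monotone: $X\le Y\Rightarrow\rho(X)\ge\rho(Y)$; cash invariant: $\rho(X+m)=\rho(X)-m$), positively homogeneous and law-invariant; $\rho_{\mathbb{F}}$ denotes $\rho$ evaluated under the law induced by $\mathbb{F}$. A risk estimator is a measurable $\hat\rho_n\colon\mathbb{R}^n\to\mathbb{R}$ that is cash invariant ($\hat\rho_n(\boldsymbol{x}+m)=\hat\rho_n(\boldsymbol{x})-m$) and positively homogeneous ($\hat\rho_n(\lambda\boldsymbol{x})=\lambda\hat\rho_n(\boldsymbol{x})$, $\lambda\ge0$). $S(c):=X+c\,\hat\rho_n(\boldsymbol{X})$ and $c^*_{\mathbb{F}}:=\inf\{c>0:\rho_{\mathbb{F}}(S(c))\le0\}$ with $\inf\emptyset=\infty$. $\|\cdot\|_{\sup}$ is the essential supremum norm. *)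

From HB Require Import structures.
From mathcomp Require Import all_boot all_order all_algebra.
From mathcomp Require Import all_classical all_reals all_analysis ess_sup_inf.
Set Implicit Arguments. Unset Strict Implicit. Unset Printing Implicit Defensive.
Import Order.TTheory GRing.Theory Num.Theory.
Import numFieldNormedType.Exports.
Local Open Scope classical_set_scope.
Local Open Scope ring_scope.

Definition mutually_independent d (T : measurableType d) (R : realType)
  (P : probability T R) (I : finType) (Y : I -> T -> R) : Prop :=
  forall B : I -> set R, (forall i, measurable (B i)) ->
    P (\bigcap_(i in [set: I]) (Y i @^-1` B i)) =
    (\prod_(i : I) P (Y i @^-1` B i))%E.

Definition has_law d (T : measurableType d) (R : realType)
  (P : probability T R) (Y : T -> R) (F : probability R R) : Prop :=
  forall A : set R, measurable A -> P (Y @^-1` A) = F A.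

Definition monetary_risk_measure d (T : measurableType d) (R : realType)
  (P : probability T R) (rho : (T -> R) -> \bar R) : Prop :=
  [/\
      (forall X Y : T -> R, measurable_fun setT X -> measurable_fun setT Y ->
         (forall w, X w <= Y w) -> (rho Y <= rho X)%E),
      (forall (X : T -> R) (m : R), measurable_fun setT X ->
         rho (fun w => X w + m) = (rho X - m%:E)%E),
      (forall (X : T -> R) (l : R), measurable_fun setT X -> 0 <= l ->
         rho (fun w => l * X w) = (l%:E * rho X)%E) &
      (forall X Y : T -> R, measurable_fun setT X -> measurable_fun setT Y ->
         (forall A : set R, measurable A -> P (X @^-1` A) = P (Y @^-1` A)) ->
         rho X = rho Y)].

Definition risk_estimator (R : realType) (n : nat) (rhohat : ('I_n -> R) -> R)
  : Prop :=
  (forall (x : 'I_n -> R) (m : R), rhohat (fun i => x i + m) = rhohat x - m) /\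
  (forall (x : 'I_n -> R) (l : R), 0 <= l ->
     rhohat (fun i => l * x i) = l * rhohat x).

Definition est_rv (T : Type) (R : realType) (n : nat)
  (rhohat : ('I_n -> R) -> R) (Xs : 'I_n -> T -> R) : T -> R :=
  fun w => rhohat (fun i => Xs i w).

Definition S (T : Type) (R : realType) (n : nat) (X : T -> R)
  (rhohat : ('I_n -> R) -> R) (Xs : 'I_n -> T -> R) (c : R) : T -> R :=
  fun w => X w + c * est_rv rhohat Xs w.

(* c*_F = inf {c > 0 : rho(S(c)) <= 0}, with inf of the empty set = +oo. *)
Definition cstar (T : Type) (R : realType) (n : nat)
  (rho : (T -> R) -> \bar R) (X : T -> R)
  (rhohat : ('I_n -> R) -> R) (Xs : 'I_n -> T -> R) : \bar R :=
  ereal_inf [set c%:E | c in [set c : R | 0 < c /\ (rho (S X rhohat Xs c) <= 0)%E]].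

Definition joint_family (T : Type) (R : realType) (n : nat) (X : T -> R)
  (Xs : 'I_n -> T -> R) : option 'I_n -> T -> R :=
  fun o => match o with None => X | Some i => Xs i end.

From HB Require Import structures.
From mathcomp Require Import all_boot all_order all_algebra.
From mathcomp Require Import all_classical all_reals all_analysis ess_sup_inf.
From mathcomp Require Import lra.

Set Implicit Arguments.
Unset Strict Implicit.
Unset Printing Implicit Defensive.

Import Order.TTheory GRing.Theory Num.Theory.
Import numFieldNormedType.Exports.
Local Open Scope classical_set_scope.
Local Open Scope ring_scope.

(* Since rho is monotone and cash invariant, 0 <= rhohat <= k almost surely
   gives rho(S c) - (c' - c) k <= rho(S c') <= rho(S c) for c <= c', so that
   c |-> rho(S c) is k-Lipschitz on [0, +oo[ with k = ||rhohat||_sup.  At the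
   infimum r > 0 of {c > 0 | rho(S c) <= 0} a Lipschitz function must vanish:
   points of that set just above r force rho(S r) <= 0, while the points just
   below r lie outside it and force rho(S r) >= 0. *)

Section lipschitz_on_nonneg.
Variables (R : realType) (f : R -> R) (L : R).
Hypotheses (L_ge0 : 0 <= L) (f_lip : L.-lipschitz_(`[0, +oo[) f).

Let L1_gt0 : 0 < L + 1. Proof. by rewrite ltr_wpDl. Qed.

Let lipf (c c' : R) : 0 <= c -> 0 <= c' -> `|f c - f c'| <= (L + 1) * `|c - c'|.
Proof.
move=> c0 c'0; have : `|f c - f c'| <= L * `|c - c'|.
  by apply: (@f_lip (c, c')); split; rewrite /= in_itv /= andbT.
by move/le_trans; apply; rewrite ler_wpM2r ?lerDl.
Qed.

Lemma lipschitz_continuous_nonneg : {within `[0, +oo[, continuous f}.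
Proof.
apply/subspace_continuousP => x; rewrite /= in_itv /= andbT => x0.
apply/cvgrPdist_le => e e0; rewrite near_withinE.
apply/nbhs_normP; exists (e / (L + 1)); first by rewrite /= divr_gt0.
move=> y /= xy; rewrite /from_subspace in_itv /= andbT => y0.
apply: le_trans (lipf x0 y0) _; rewrite -ler_pdivlMl //.
by rewrite mulrC ltW.
Qed.

Lemma lipschitz_eq0_at_inf_sublevel (r : R) : 0 < r ->
  ereal_inf [set c%:E | c in [set c | 0 < c /\ f c <= 0]] = r%:E -> f r = 0.
Proof.
move=> r0; set S := [set _%:E | _ in _] => infE.
have lb c : 0 < c -> f c <= 0 -> r <= c.
  by move=> c0 fc0; rewrite -lee_fin -infE; apply: ereal_inf_lbound; exists c.
have adh e : 0 < e -> exists c, [/\ 0 < c, f c <= 0 & c < r + e].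
  move=> e0; have := @lb_ereal_inf_adherent _ S _ e0; rewrite infE.
  by move=> /(_ isT) [_ [c [c0 fc0] <-]]; rewrite -EFinD lte_fin; exists c.
apply/eqP; rewrite eq_le; apply/andP; split; rewrite leNgt; apply/negP.
- move=> fr_gt0; have [c [c0 fc0 cr]] := adh _ (divr_gt0 fr_gt0 L1_gt0).
  have := lipf (ltW r0) (ltW c0).
  rewrite [`|r - c|]distrC (ger0_norm (x := c - r)) ?subr_ge0 ?lb //.
  rewrite ler_norml => /andP[_ +].
  have : (L + 1) * (c - r) < f r by rewrite mulrC -ltr_pdivlMr // ltrBlDl.
  lra.
- move=> fr_lt0; pose t := Num.min (r / 2) (- f r / (L + 1)).
  have t0 : 0 < t by rewrite lt_min !divr_gt0 ?oppr_gt0.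
  have Lt : (L + 1) * t <= - f r by rewrite mulrC -ler_pdivlMr // ge_min lexx orbT.
  have rt0 : 0 < r - t.
    suff : t <= r / 2 by lra.
    by rewrite ge_min lexx.
  have := lipf (ltW rt0) (ltW r0).
  rewrite addrAC subrr add0r normrN (gtr0_norm t0) ler_norml => /andP[_ frt].
  have := lb _ rt0 (_ : f (r - t) <= 0); lra.
Qed.

End lipschitz_on_nonneg.

Lemma preimage_ae_eq (R : realType) (d : measure_display) (T : measurableType d)
  (mu : {measure set T -> \bar R}) (U V : T -> R) :
  measurable_fun setT U -> measurable_fun setT V ->
  {ae mu, forall w, U w = V w} ->
  forall A : set R, measurable A -> mu (U @^-1` A) = mu (V @^-1` A).
Proof.
move=> mU mV [N [mN muN0 UVN]] A mA.
have mUA : measurable (U @^-1` A) by rewrite -[_ @^-1` _]setTI; exact: mU.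
have mVA : measurable (V @^-1` A) by rewrite -[_ @^-1` _]setTI; exact: mV.
rewrite -(measureU0 mUA mN muN0) -(measureU0 mVA mN muN0); congr (mu _).
have UV_off w : ~ N w -> U w = V w by move=> Nw; apply: contra_notP Nw => /UVN.
apply/seteqP; split=> w [Aw|Nw]; try by right.
- by have [|/UV_off UVw] := pselect (N w); [right | left; rewrite /= -UVw].
- by have [|/UV_off UVw] := pselect (N w); [right | left; rewrite /= UVw].
Qed.

Lemma ess_sup_abs_bounded (R : realType) (d : measure_display) (T : measurableType d)
  (P : probability T R) (E : T -> R) (M : R) :
  {ae P, forall w, `|E w| <= M} ->
  exists k, [/\ 0 <= k, ess_sup P (fun w => (`|E w|)%:E) = k%:E
    & {ae P, forall w, `|E w| <= k}].
Proof.
move=> EM; have P_gt0 : (0 < P setT)%E by rewrite probability_setT lte01.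
have ess_ge0 : (0 <= ess_sup P (fun w => (`|E w|)%:E))%E.
  by apply: ess_sup_gee => //; apply: nearW => w; rewrite lee_fin.
have ess_fin : ess_sup P (fun w => (`|E w|)%:E) \is a fin_num.
  rewrite ge0_fin_numE //; apply: le_lt_trans (ltry M).
  by apply/ess_supP; apply: filterS EM => w; rewrite lee_fin.
exists (fine (ess_sup P (fun w => (`|E w|)%:E))); rewrite fine_ge0 // fineK //.
split=> //; apply: filterS (ess_sup_ge P (fun w => (`|E w|)%:E)) => w.
by rewrite -lee_fin fineK.
Qed.

Section scaled_risk.
Variables (R : realType) (d : measure_display) (T : measurableType d).
Variables (P : probability T R) (rho : (T -> R) -> \bar R).
Hypothesis rho_risk : monetary_risk_measure P rho.

(* Law invariance makes rho blind to null sets, so an almost sure inequality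
   can be replaced by the pointwise one U <= U \max V. *)
Lemma risk_ae_antitone (U V : T -> R) :
  measurable_fun setT U -> measurable_fun setT V ->
  {ae P, forall w, U w <= V w} -> (rho V <= rho U)%E.
Proof.
case: rho_risk => mono _ _ law_inv mU mV UV.
have mUV : measurable_fun setT (U \max V) by exact: measurable_realfun.measurable_maxr.
have -> : rho V = rho (U \max V).
  apply: law_inv => //; apply: preimage_ae_eq => //.
  by apply: filterS UV => w /= /max_idPr.
by apply: mono => // w /=; rewrite le_max lexx.
Qed.

Variables (U E : T -> R).
Hypotheses (mU : measurable_fun setT U) (mE : measurable_fun setT E).
Hypothesis E_ge0 : {ae P, forall w, 0 <= E w}.

Let measurable_scaled c : measurable_fun setT (fun w => U w + c * E w).
Proof.
exact: measurable_realfun.measurable_funD mU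
  (measurable_realfun.measurable_funM (measurable_cst c) mE).
Qed.

Lemma risk_scale_antitone (c c' : R) : c <= c' ->
  (rho (fun w => U w + c' * E w)%R <= rho (fun w => U w + c * E w)%R)%E.
Proof.
move=> cc'; apply: risk_ae_antitone => //.
by apply: filterS E_ge0 => w E0; rewrite lerD2l ler_wpM2r.
Qed.

Lemma risk_scale_increment (k c c' : R) :
  {ae P, forall w, E w <= k} -> c <= c' ->
  (rho (fun w => U w + c * E w)%R - ((c' - c) * k)%:E
    <= rho (fun w => U w + c' * E w)%R)%E.
Proof.
case: rho_risk => _ cash _ _ Ek cc'.
rewrite -cash //; apply: risk_ae_antitone => //.
  exact: measurable_realfun.measurable_funD (measurable_scaled c) (measurable_cst _).
apply: filterS Ek => w Ewk.
have -> : c' * E w = c * E w + (c' - c) * E w by rewrite mulrBl addrCA subrr addr0.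
by rewrite addrA lerD2l ler_wpM2l ?subr_ge0.
Qed.

Lemma risk_scale_lipschitz (k : R) :
  {ae P, forall w, E w <= k} ->
  (forall c, 0 <= c -> rho (fun w => U w + c * E w) \is a fin_num) ->
  k.-lipschitz_(`[0, +oo[) (fun c : R => fine (rho (fun w => U w + c * E w))).
Proof.
move=> Ek rho_fin [c c'] [/=]; rewrite !in_itv /= !andbT => c0 c'0.
wlog cc' : c c' c0 c'0 / c <= c'.
  move=> wlog_le; have [|/ltW c'c] := leP c c'; first exact: wlog_le.
  by rewrite distrC [`|c - c'|]distrC; exact: wlog_le.
have := risk_scale_antitone cc'; have := risk_scale_increment Ek cc'.
rewrite -(fineK (rho_fin c c0)) -(fineK (rho_fin c' c'0)) -EFinB !lee_fin.
rewrite [`|c - c'|]distrC (ger0_norm (x := c' - c)) ?subr_ge0 // ler_norml.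
move=> inc anti; apply/andP; split; rewrite mulrC; lra.
Qed.

End scaled_risk.

Theorem mainTheorem2 (R : realType) (d : measure_display) (T : measurableType d)
  (P : probability T R) (F : probability R R) (n : nat)
  (X : T -> R) (Xs : 'I_n -> T -> R)
  (rho : (T -> R) -> \bar R) (rhohat : ('I_n -> R) -> R) :
  measurable_fun setT X ->
  (forall i, measurable_fun setT (Xs i)) ->
  mutually_independent P (joint_family X Xs) ->
  has_law P X F ->
  (forall i, has_law P (Xs i) F) ->
  monetary_risk_measure P rho ->
  risk_estimator rhohat ->
  measurable_fun setT (est_rv rhohat Xs) ->
  (exists M : R, {ae P, forall w, `|est_rv rhohat Xs w| <= M}) ->
  {ae P, forall w, 0 <= est_rv rhohat Xs w} ->
  (forall c : R, 0 <= c -> rho (S X rhohat Xs c) \is a fin_num) ->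
  [/\ (forall c c' : R, 0 <= c -> c <= c' ->
         (rho (S X rhohat Xs c') <= rho (S X rhohat Xs c))%E),
      {within `[0, +oo[, continuous (fun c : R => fine (rho (S X rhohat Xs c)))},
      (forall c c' : R, 0 <= c -> 0 <= c' ->
         (`|rho (S X rhohat Xs c) - rho (S X rhohat Xs c')|
           <= `|c - c'|%:E * ess_sup P (fun w => (`|est_rv rhohat Xs w|)%:E))%E) &
      ((0 < cstar rho X rhohat Xs < +oo)%E ->
         rho (S X rhohat Xs (fine (cstar rho X rhohat Xs))) = 0%E)].
Proof.
move=> mX _ _ _ _ rho_risk _ mE [M EM] E_ge0 rho_fin.
have [k [k0 essE Ek]] := ess_sup_abs_bounded EM.
have Ek' : {ae P, forall w, est_rv rhohat Xs w <= k}.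
  by apply: filterS Ek => w; apply: le_trans (ler_norm _).
have lip : k.-lipschitz_(`[0, +oo[) (fun c => fine (rho (S X rhohat Xs c))) :=
  risk_scale_lipschitz rho_risk mX mE E_ge0 Ek' rho_fin.
split.
- by move=> c c' _ cc'; exact (risk_scale_antitone rho_risk mX mE E_ge0 cc').
- exact: lipschitz_continuous_nonneg k0 lip.
- move=> c c' c0 c'0; rewrite -(fineK (rho_fin c c0)) -(fineK (rho_fin c' c'0)).
  rewrite essE -EFinB -EFinM lee_fin mulrC; apply: (@lip (c, c')).
  by split; rewrite /= in_itv /= andbT.
- case/andP=> cstar_gt0 cstar_lt_oo.
  have cstarE : cstar rho X rhohat Xs = (fine (cstar rho X rhohat Xs))%:E.
    by rewrite fineK // fin_numE gt_eqF ?lt_eqF // (lt_trans _ cstar_gt0) ?ltNy0.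
  set r := fine _ in cstarE *.
  have r_gt0 : 0 < r by rewrite -lte_fin -cstarE.
  rewrite -(fineK (rho_fin r (ltW r_gt0))); congr EFin.
  apply: (lipschitz_eq0_at_inf_sublevel k0 lip r_gt0).
  rewrite -cstarE; congr (ereal_inf [set _%:E | _ in _]).
  apply/seteqP; split=> c [c_gt0 rho_le0]; split=> //.
    by rewrite -(fineK (rho_fin c (ltW c_gt0))) lee_fin.
  by rewrite -lee_fin (fineK (rho_fin c (ltW c_gt0))).
Qed.
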